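(* Let $n\ge 2$ and let $A$ be an $n\times n$ real matrix with spectrum $\{\lambda_1,\dots,\lambda_n\}$ (counting multiplicities). Suppose $\lambda_1$ is real and associated with a real eigenvector $v$ with no zero components, let $D=\mathrm{diag}(v)$ and $B=D^{-1}AD$. Then for every $p\in\mathbb{N}\cup\{\infty\}$, every $i=2,\dots,n$ and every $k\in\mathbb{N}$, $$|\lambda_i|\le\sqrt[k]{\tau_p(B^k)}.$$
   Context: For an $n\times n$ real matrix $M$ ($n\ge 2$) and $p\in\mathbb{N}\cup\{\infty\}$, define $$\tau_p(M)=\max\{\|M^Tx\|_p: x\in\mathbb{R}^n,\ x^Te=0,\ \|x\|_p=1\},$$ where $e$ is the all-ones vector and $\|\cdot\|_p$ is the $\ell_p$-norm. *)

From HB Require Import structures.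
From mathcomp Require Import all_boot all_order all_algebra.
From mathcomp Require Import all_classical all_reals.
From mathcomp Require Import exp.
From mathcomp Require Import complex.
Set Implicit Arguments. Unset Strict Implicit. Unset Printing Implicit Defensive.
Import Order.TTheory GRing.Theory Num.Theory.
Local Open Scope ring_scope.
Local Open Scope classical_set_scope.

(* Exponent p in N u {oo}: [Some q] is the finite exponent q (the theorem
   requires q >= 1), [None] is p = oo. *)
Definition pnorm (R : realType) (n : nat) (p : option nat) (x : 'cV[R]_n) : R :=
  match p with
  | Some q => (\sum_(i < n) `|x i 0| `^ q%:R) `^ (q%:R)^-1
  | None => \big[Num.max/0]_(i < n) `|x i 0|
  end.

(* tau_p(M) = max { ||M^T x||_p : x^T e = 0, ||x||_p = 1 } (taken as a sup;
   the maximum is attained by compactness). *)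
Definition tau (R : realType) (n : nat) (p : option nat) (M : 'M[R]_n) : R :=
  sup [set r : R | exists x : 'cV[R]_n,
         \sum_(i < n) x i 0 = 0 /\ pnorm p x = 1 /\ r = pnorm p (M^T *m x)].

Definition cmod (R : realType) (z : R[i]) : R :=
  let: Complex a b := z in Num.sqrt (a ^+ 2 + b ^+ 2).

From HB Require Import structures.
From mathcomp Require Import all_boot all_order all_algebra.
From mathcomp Require Import all_classical all_reals.
From mathcomp Require Import exp.
From mathcomp Require Import complex.
From mathcomp Require Import topology normedtype sequences.
Set Implicit Arguments. Unset Strict Implicit. Unset Printing Implicit Defensive.
Import Order.TTheory GRing.Theory Num.Theory numFieldNormedType.Exports.
Local Open Scope ring_scope.
Local Open Scope classical_set_scope.

Local Notation Re := complex.Re.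

(* Since B e = l1 e for the all-ones vector e, the matrices (B^k)^T leave the
   hyperplane e^T x = 0 invariant, and tau_p(B^k) is the p-operator norm of
   (B^k)^T restricted to it.  Any other eigenvalue mu of B has a left
   eigenvector z with z e = 0 (conjugate B so that its first column is
   l1 e_1; the remaining eigenvalues are those of the complementary block).
   Then z^T is a complex eigenvector of (B^k)^T in the hyperplane, and the
   usual power argument (real parts of suitably rotated multiples of z^T)
   gives |mu^k| <= tau_p(B^k), i.e. |mu| <= tau_p(B^k)^(1/k). *)

Section Eigenvectors.
Variable F : comNzRingType.

Lemma mulmx_exp_eigen n m (M : 'M[F]_n) (x : 'M[F]_(n, m)) a k :
  M *m x = a *: x -> M ^+ k *m x = a ^+ k *: x.
Proof.
move=> Mx; elim: k => [|k IHk]; first by rewrite !expr0 mul1mx scale1r.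
by rewrite exprSr -mulmxE -mulmxA Mx -scalemxAr IHk scalerA -exprS.
Qed.

Lemma mulmx_exp_left_eigen n m (M : 'M[F]_n) (x : 'M[F]_(m, n)) a k :
  x *m M = a *: x -> x *m M ^+ k = a ^+ k *: x.
Proof.
move=> xM; elim: k => [|k IHk]; first by rewrite !expr0 mulmx1 scale1r.
by rewrite exprS -mulmxE mulmxA xM -scalemxAl IHk scalerA -exprS.
Qed.

Lemma sum_trmx_mulmx n (M : 'M[F]_n) c (w : 'cV[F]_n) :
  M *m const_mx 1 = c *: const_mx 1 :> 'cV_n ->
  \sum_j (M^T *m w) j 0 = c * \sum_j w j 0.
Proof.
move=> Me; rewrite mulr_sumr; under eq_bigr do rewrite mxE.
rewrite exchange_big /=; apply: eq_bigr => l _.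
have := congr1 (fun u : 'cV_n => u l 0) Me; rewrite !mxE mulr1 => <-.
by rewrite mulr_suml; apply: eq_bigr => j _; rewrite !mxE mulr1.
Qed.

Lemma sum_trmx_exp_mulmx n (M : 'M[F]_n) c (w : 'cV[F]_n) k :
  M *m const_mx 1 = c *: const_mx 1 :> 'cV_n ->
  \sum_j ((M^T) ^+ k *m w) j 0 = c ^+ k * \sum_j w j 0.
Proof.
move=> Me; elim: k => [|k IHk]; first by rewrite !expr0 mul1mx mul1r.
by rewrite exprS -mulmxE -mulmxA (sum_trmx_mulmx _ Me) IHk mulrA -exprS.
Qed.

End Eigenvectors.

Lemma char_poly_conj (F : comNzRingType) n (T S M : 'M[F]_n) :
  T *m S = 1%:M -> char_poly (T *m M *m S) = char_poly M.
Proof.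
move=> TS; rewrite /char_poly.
have -> : char_poly_mx (T *m M *m S) =
    map_mx polyC T *m char_poly_mx M *m map_mx polyC S.
  rewrite /char_poly_mx mulmxBr mulmxBl -!map_mxM; congr (_ - _).
  by rewrite mul_mx_scalar -scalemxAl -map_mxM TS map_mx1 scalemx1.
by rewrite !det_mulmx mulrAC -det_mulmx -map_mxM TS map_mx1 det1 mul1r.
Qed.

Definition row_ins0 {F : nzRingType} {n} (u : 'rV[F]_n) : 'rV[F]_n.+1 :=
  \row_j (if unlift 0 j is Some k then u 0 k else 0).

Lemma row_ins0_eq0 (F : nzRingType) n (u : 'rV[F]_n) :
  (row_ins0 u == 0) = (u == 0).
Proof.
apply/eqP/eqP => [u0|->]; last first.
  by apply/rowP => j; rewrite !mxE; case: unlift => [k|] //; rewrite mxE.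
apply/rowP => k; have := congr1 (fun v : 'rV_n.+1 => v 0 (lift 0 k)) u0.
by rewrite !mxE liftK.
Qed.

Section FirstColumn.
Context {F : comNzRingType} {n : nat} {M : 'M[F]_n.+1} {c : F}.
Hypothesis M_col0 : M *m delta_mx 0 0 = c *: delta_mx 0 (0 : 'I_1).

Let M_col0E i : M i 0 = c *+ (i == 0).
Proof.
have := congr1 (fun u : 'cV_n.+1 => u i 0) M_col0.
by rewrite -colE !mxE eqxx andbT mulr_natr.
Qed.

Lemma char_poly_col0 :
  char_poly M = ('X - c%:P) * char_poly (row' 0 (col' 0 M)).
Proof.
rewrite /char_poly (expand_det_col _ 0) big_ord_recl big1 => [|i _]; last first.
  by rewrite !mxE M_col0E /= mulr0n subr0 mul0r.
rewrite addr0 /cofactor row'_col'_char_poly_mx !mxE M_col0E eqxx.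
by rewrite expr0 mul1r mulr1n.
Qed.

Lemma row_ins0_left_eigen u mu : u *m row' 0 (col' 0 M) = mu *: u ->
  row_ins0 u *m M = mu *: row_ins0 u.
Proof.
move=> uM; apply/rowP => k.
rewrite !mxE big_ord_recl !mxE unlift_none mul0r add0r.
case: (unliftP 0 k) => [k'|] ->.
  have := congr1 (fun v : 'rV_n => v 0 k') uM; rewrite !mxE => <-.
  by apply: eq_bigr => i _; rewrite !mxE liftK.
rewrite mulr0; apply: big1 => i _.
by rewrite !mxE liftK M_col0E mulr0n mulr0.
Qed.

End FirstColumn.

Lemma exists_unitmx_col0_const (F : comNzRingType) n :
  exists S T : 'M[F]_n.+1,
    [/\ T *m S = 1%:M, S *m T = 1%:M & S *m delta_mx 0 (0 : 'I_1) = const_mx 1].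
Proof.
pose E : 'M[F]_n.+1 := \matrix_(i, j) ((j == 0) && (i != 0))%:R.
have EE : E *m E = 0.
  apply/matrixP => i j; rewrite !mxE big1 // => k _; rewrite !mxE.
  by case: (k == 0); rewrite ?andbF ?mulr0 ?mul0r.
exists (1%:M + E), (1%:M - E); split.
- by rewrite mulmxBl !mulmxDr !mul1mx mulmx1 EE addr0 addrK.
- by rewrite mulmxDl !mulmxBr !mul1mx mulmx1 EE subr0 addrNK.
- apply/matrixP => i j; rewrite -colE !mxE eqxx.
  by case: (i == 0); rewrite ?addr0 ?add0r.
Qed.

Lemma left_eigen_sum0 (F : fieldType) n (B : 'M[F]_n.+1) c mu q :
  B *m const_mx 1 = c *: const_mx 1 :> 'cV_n.+1 ->
  char_poly B = ('X - c%:P) * q -> root q mu ->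
  exists2 z : 'rV_n.+1,
    z != 0 & z *m B = mu *: z /\ z *m const_mx 1 = 0 :> 'M_1.
Proof.
move=> Be Bq qmu; have [S [T [TS ST Se1]]] := exists_unitmx_col0_const F n.
have Te : T *m const_mx 1 = delta_mx 0 (0 : 'I_1).
  by rewrite -Se1 mulmxA TS mul1mx.
pose Bt := T *m B *m S.
have Bt_col0 : Bt *m delta_mx 0 0 = c *: delta_mx 0 (0 : 'I_1).
  by rewrite -!mulmxA Se1 Be -scalemxAr Te.
have Btq : char_poly (row' 0 (col' 0 Bt)) = q.
  apply: (@mulfI _ ('X - c%:P)); first by rewrite polyXsubC_eq0.
  by rewrite -char_poly_col0 // char_poly_conj // -Bq.
have /eigenvalueP [u uBt u0] : eigenvalue (row' 0 (col' 0 Bt)) mu.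
  by rewrite eigenvalue_root_char Btq.
exists (row_ins0 u *m T).
  apply: contraNneq u0 => uT0; rewrite -row_ins0_eq0.
  by rewrite -[row_ins0 u]mulmx1 -TS mulmxA uT0 mul0mx.
split.
  have TB : T *m B = Bt *m T by rewrite /Bt -mulmxA ST mulmx1.
  by rewrite -mulmxA TB mulmxA (row_ins0_left_eigen Bt_col0 uBt) scalemxAl.
rewrite -mulmxA Te; apply/matrixP => i j.
by rewrite -colE !mxE unlift_none.
Qed.

Lemma diag_mx_unit (F : fieldType) n (v : 'cV[F]_n) :
  (forall j, v j 0 != 0) -> diag_mx v^T \in unitmx.
Proof.
move=> v0; rewrite unitmxE det_diag unitfE.
by apply/prodf_neq0 => j _; rewrite mxE.
Qed.

Lemma diag_conj_mulmx_const (F : fieldType) n (A : 'M[F]_n) (v : 'cV[F]_n) l :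
  (forall j, v j 0 != 0) -> A *m v = l *: v ->
  invmx (diag_mx v^T) *m A *m diag_mx v^T *m const_mx 1
    = l *: const_mx 1 :> 'cV_n.
Proof.
move=> v0 Av; have Du := diag_mx_unit v0; set D := diag_mx v^T in Du *.
have De : D *m const_mx 1 = v.
  by apply/matrixP => i j; rewrite mul_diag_mx !mxE ord1 mulr1.
have Dv : invmx D *m v = const_mx 1 by rewrite -De mulmxA mulVmx ?mul1mx.
by rewrite -mulmxA De -mulmxA Av -scalemxAr Dv.
Qed.

Section PNorm.
Context {R : realType} {n : nat} {p : option nat}.
Hypothesis p_ge1 : forall q, p = Some q -> (1 <= q)%N.
Local Notation N := (@pnorm R n p).

Lemma pnorm_ge0 (x : 'cV[R]_n) : 0 <= N x.
Proof.
case: p => [q|] /=; first exact: powR_ge0.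
by elim/big_ind: _ => // a b a0 b0; rewrite le_max a0.
Qed.

Lemma pnormZ a (x : 'cV[R]_n) : N (a *: x) = `|a| * N x.
Proof.
case: p p_ge1 => [q|] q1 /=; last first.
  rewrite (big_morph _ (fun y z => maxr_pMr y z (normr_ge0 a)) (mulr0 _)).
  by apply: eq_bigr => i _; rewrite mxE normrM.
have q0 : (q%:R : R) != 0 by rewrite pnatr_eq0 -lt0n (q1 q erefl).
under eq_bigr do rewrite mxE normrM powRM //.
rewrite -mulr_sumr powRM ?powR_ge0 ?sumr_ge0 // => [|i _]; last exact: powR_ge0.
by rewrite -powRrM mulfV // powRr1.
Qed.

Lemma pnorm0 : N 0 = 0.
Proof. by rewrite -(scale0r (0 : 'cV[R]_n)) pnormZ normr0 mul0r. Qed.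

Lemma normr_le_pnorm (x : 'cV[R]_n) j : `|x j 0| <= N x.
Proof.
case: p p_ge1 => [q|] q1 /=; last by rewrite (bigD1 j) //= le_max lexx.
have q0 : (q%:R : R) != 0 by rewrite pnatr_eq0 -lt0n (q1 q erefl).
have -> : `|x j 0| = (`|x j 0| `^ q%:R) `^ (q%:R)^-1.
  by rewrite -powRrM mulfV // powRr1.
apply: ge0_ler_powR; rewrite ?nnegrE ?invr_ge0 ?powR_ge0 ?sumr_ge0 //.
  by move=> i _; exact: powR_ge0.
by rewrite (bigD1 j) //= lerDl sumr_ge0 // => i _; exact: powR_ge0.
Qed.

Lemma pnorm_le (x y : 'cV[R]_n) :
  (forall j, `|x j 0| <= `|y j 0|) -> N x <= N y.
Proof.
move=> xy; case: p p_ge1 => [q|] q1 /=; last exact: le_bigmax2.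
apply: ge0_ler_powR; rewrite ?nnegrE ?invr_ge0 ?sumr_ge0 //;
  try by move=> i _; exact: powR_ge0.
by apply: ler_sum => i _; apply: ge0_ler_powR; rewrite ?nnegrE.
Qed.

Lemma pnorm_gt0 (x : 'cV[R]_n) : x != 0 -> 0 < N x.
Proof.
by case/cV0Pn => j xj; rewrite (lt_le_trans _ (normr_le_pnorm x j)) ?normr_gt0.
Qed.

End PNorm.

Lemma ler_of_pow_bound (R : realType) (r t a K : R) : 0 < a -> 0 <= t ->
  (forall m, r ^+ m * a <= t ^+ m * K) -> r <= t.
Proof.
move=> a0 t0 h; rewrite leNgt; apply/negP => tr.
have r0 : 0 < r := le_lt_trans t0 tr.
have tr1 : `|t / r| < 1.
  by rewrite ger0_norm ?ltr_pdivrMr ?mul1r // divr_ge0 // ltW.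
have tK0 : (t / r) ^+ m * K @[m --> \oo] --> (0 : R).
  by rewrite -(mul0r K); apply: cvgMr_tmp; exact: cvg_expr.
have [N _ /(_ N (leqnn N))] := cvgr_lt _ tK0 _ a0.
by rewrite exprMn exprVn mulrAC ltr_pdivrMr ?exprn_gt0 // [a * _]mulrC ltNge h.
Qed.

Lemma ler_powR_invn (R : realType) (a b : R) k :
  (0 < k)%N -> 0 <= a -> a ^+ k <= b -> a <= b `^ k%:R^-1.
Proof.
move=> k0 a0 ab; have k0' : (k%:R : R) != 0 by rewrite pnatr_eq0 -lt0n.
have -> : a = (a ^+ k) `^ k%:R^-1.
  by rewrite -powR_mulrn // -powRrM mulfV ?powRr1.
apply: ge0_ler_powR; rewrite ?nnegrE ?invr_ge0 ?exprn_ge0 //.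
exact: le_trans (exprn_ge0 k a0) ab.
Qed.

Section ComplexModulus.
Variable R : realType.
Local Open Scope complex_scope.

Lemma normcE (z : R[i]) : `|z| = (cmod z)%:C.
Proof. by rewrite normc_def; case: z. Qed.

Lemma cmod_ge0 (z : R[i]) : 0 <= cmod z.
Proof. by rewrite -ler0c -normcE. Qed.

Lemma cmodM (a b : R[i]) : cmod (a * b) = cmod a * cmod b.
Proof. by apply: complexI; rewrite rmorphM -!normcE normrM. Qed.

Lemma cmodX (a : R[i]) m : cmod (a ^+ m) = cmod a ^+ m.
Proof. by apply: complexI; rewrite rmorphXn -!normcE normrX. Qed.

Lemma cmod0 : cmod (0 : R[i]) = 0.
Proof. by apply: complexI; rewrite -normcE normr0. Qed.

Lemma cmod_eq0 (z : R[i]) : (cmod z == 0) = (z == 0).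
Proof. by rewrite -[z == 0]normr_eq0 normcE -(inj_eq (@complexI R)). Qed.

Lemma cmod_normr_div (w : R[i]) : w != 0 -> cmod (`|w| / w) = 1.
Proof.
move=> w0; apply: complexI; rewrite -normcE normrM normfV normr_id.
by rewrite mulfV ?normr_eq0.
Qed.

Lemma Re_le_cmod (z : R[i]) : `|Re z| <= cmod z.
Proof.
case: z => a b /=; rewrite -sqrtr_sqr ler_sqrt ?addr_ge0 ?sqr_ge0 //.
by rewrite lerDl sqr_ge0.
Qed.

Lemma sum_Re_mx n (w : 'cV[R[i]]_n) :
  \sum_j (map_mx (@Re R) w) j 0 = Re (\sum_j w j 0).
Proof. by rewrite raddf_sum; apply: eq_bigr => j _; rewrite mxE. Qed.

Lemma Re_mx_scale_real n k (w : 'cV[R[i]]_n) :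
  map_mx (@Re R) (k%:C *: w) = k *: map_mx (@Re R) w.
Proof.
apply/matrixP => i j; rewrite !mxE.
by case: (w i j) => a b /=; rewrite !mul0r subr0.
Qed.

Lemma mulmx_Re_mx n (M : 'M[R]_n) (w : 'cV[R[i]]_n) :
  M *m map_mx (@Re R) w = map_mx (@Re R) (map_mx (real_complex R) M *m w).
Proof.
apply/matrixP => i j; rewrite !mxE raddf_sum; apply: eq_bigr => l _.
by rewrite !mxE; case: (w l j) => a b /=; rewrite !mul0r subr0.
Qed.

Lemma exp_mulmx_Re_mx_eigen n (M : 'M[R]_n) mu (z : 'cV[R[i]]_n) a k :
  map_mx (real_complex R) M *m z = mu *: z ->
  M ^+ k *m map_mx (@Re R) (a *: z) = map_mx (@Re R) ((a * mu ^+ k) *: z).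
Proof.
move=> Mz; elim: k a => [|k IHk] a; first by rewrite expr0 mul1mx mulr1.
rewrite exprSr -mulmxE -mulmxA mulmx_Re_mx -scalemxAr Mz scalerA IHk.
by rewrite -mulrA -exprS.
Qed.

End ComplexModulus.

Section Tau.
Variables (R : realType) (n : nat) (p : option nat).
Hypothesis p_ge1 : forall q, p = Some q -> (1 <= q)%N.
Local Notation N := (@pnorm R n p).

Let tau_set (M : 'M[R]_n) := [set r : R | exists x : 'cV[R]_n,
  \sum_(i < n) x i 0 = 0 /\ N x = 1 /\ r = N (M^T *m x)].

Let tau_set_ubound (M : 'M[R]_n) : has_ubound (tau_set M).
Proof.
have C0 : 0 <= \sum_i \sum_l `|M l i|.
  by apply: sumr_ge0 => i _; apply: sumr_ge0.
exists (N (const_mx (\sum_i \sum_l `|M l i|))) => _ [x [_ [x1 ->]]].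
apply: pnorm_le => // j; rewrite !mxE (ger0_norm C0).
apply: (le_trans (ler_norm_sum _ _ _)).
apply: (@le_trans _ _ (\sum_l `|M l j|)).
  apply: ler_sum => l _; rewrite !mxE normrM ler_piMr // -x1.
  exact: normr_le_pnorm.
by rewrite [leRHS](bigD1 j) //= lerDl sumr_ge0 // => i _; rewrite sumr_ge0.
Qed.

Lemma pnorm_trmx_mulmx_le_tau (M : 'M[R]_n) (w : 'cV[R]_n) :
  \sum_j w j 0 = 0 -> N (M^T *m w) <= tau p M * N w.
Proof.
have [->|w0] := eqVneq w 0; first by rewrite mulmx0 pnorm0 // mulr0.
move=> w_sum0; have Nw0 := pnorm_gt0 p_ge1 w0.
have Nw_inv0 : 0 <= (N w)^-1 by rewrite invr_ge0 ltW.
have x_in : tau_set M (N (M^T *m ((N w)^-1 *: w))).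
  exists ((N w)^-1 *: w); split; [|split] => //.
    by under eq_bigr do rewrite mxE; rewrite -mulr_sumr w_sum0 mulr0.
  by rewrite pnormZ // ger0_norm // mulVf // gt_eqF.
have := sup_upper_bound (conj (ex_intro _ _ x_in) (tau_set_ubound M)) x_in.
rewrite -scalemxAr pnormZ // ger0_norm // => le_tau.
by rewrite -ler_pdivrMr // mulrC.
Qed.

Lemma tau_ge0 (M : 'M[R]_n) (w : 'cV[R]_n) :
  w != 0 -> \sum_j w j 0 = 0 -> 0 <= tau p M.
Proof.
move=> w0 w_sum0; rewrite -(pmulr_lge0 _ (pnorm_gt0 p_ge1 w0)).
exact: le_trans (pnorm_ge0 _) (pnorm_trmx_mulmx_le_tau M w_sum0).
Qed.

Lemma pnorm_trmx_exp_mulmx_le_tau (M : 'M[R]_n) c (w : 'cV[R]_n) k :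
  M *m const_mx 1 = c *: const_mx 1 :> 'cV_n -> \sum_j w j 0 = 0 ->
  N (M^T ^+ k *m w) <= tau p M ^+ k * N w.
Proof.
move=> Me w_sum0; have [->|w0] := eqVneq w 0.
  by rewrite mulmx0 pnorm0 // mulr0.
have tau0 := tau_ge0 M w0 w_sum0.
elim: k => [|k IHk]; first by rewrite !expr0 mul1mx mul1r.
have sum0 : \sum_j (M^T ^+ k *m w) j 0 = 0.
  by rewrite (sum_trmx_exp_mulmx _ _ Me) w_sum0 mulr0.
rewrite exprS -mulmxE -mulmxA.
apply: le_trans (pnorm_trmx_mulmx_le_tau _ sum0) _.
by rewrite exprS -mulrA ler_wpM2l.
Qed.

Lemma cmod_eigenvalue_le_tau (M : 'M[R]_n) c mu (z : 'cV[R[i]]_n) :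
  M *m const_mx 1 = c *: const_mx 1 :> 'cV_n -> z != 0 -> \sum_j z j 0 = 0 ->
  map_mx (real_complex R) M^T *m z = mu *: z -> cmod mu <= tau p M.
Proof.
move=> Me z0 z_sum0 Mz.
have Re_sum0 a : \sum_j (map_mx (@Re R) (a *: z)) j 0 = 0.
  rewrite sum_Re_mx; under eq_bigr do rewrite mxE.
  by rewrite -mulr_sumr z_sum0 mulr0.
have /cV0Pn [j0 zj0] := z0.
(* [b] rotates [z] so that [Re (b z)] is nonzero at [j0]; [d] makes
   [d * mu ^+ k] real, so that [M^T ^+ k] maps the bounded vectors [y] to
   [cmod mu ^+ k *: x]. *)
pose b := `|z j0 0| / z j0 0.
pose x := map_mx (@Re R) (b *: z).
have x0 : x != 0.
  apply/cV0Pn; exists j0; rewrite !mxE divfK // normcE /=.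
  by rewrite cmod_eq0.
have tau0 := tau_ge0 M x0 (Re_sum0 b).
have [->|mu0] := eqVneq mu 0; first by rewrite cmod0.
apply: (ler_of_pow_bound (K := N (map_mx (@cmod R) z)) (pnorm_gt0 p_ge1 x0)).
  exact: tau0.
move=> k.
pose d := `|mu ^+ k| / mu ^+ k.
pose y := map_mx (@Re R) ((d * b) *: z).
have My : M^T ^+ k *m y = cmod mu ^+ k *: x.
  rewrite (exp_mulmx_Re_mx_eigen _ _ Mz) mulrAC divfK ?expf_neq0 //.
  by rewrite normcE cmodX -scalerA Re_mx_scale_real.
have Ny : N y <= N (map_mx (@cmod R) z).
  apply: (pnorm_le p_ge1) => j; rewrite !mxE (ger0_norm (cmod_ge0 _)).
  rewrite (le_trans (Re_le_cmod _)) // 2!cmodM /d /b.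
  by rewrite !cmod_normr_div ?expf_neq0 // !mul1r.
rewrite -(ger0_norm (exprn_ge0 k (cmod_ge0 mu))) -pnormZ // -My.
apply: le_trans (pnorm_trmx_exp_mulmx_le_tau k Me (Re_sum0 _)) _.
by rewrite ler_wpM2l // exprn_ge0.
Qed.

End Tau.

Theorem corollary3 (R : realType) (n : nat) (A : 'M[R]_n)
    (lam : 'I_n -> R[i]) (i1 : 'I_n) (l1 : R) (v : 'cV[R]_n) :
  (1 < n)%N ->
  (* lam enumerates the spectrum of A with multiplicities *)
  map_poly (fun x : R => x%:C%C) (char_poly A) = \prod_(j < n) ('X - (lam j)%:P) ->
  (* lambda_1 = lam i1 is real, with real eigenvector v without zero entries *)
  lam i1 = l1%:C%C ->
  A *m v = l1 *: v ->
  (forall j : 'I_n, v j 0 != 0) ->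
  let D := diag_mx v^T in
  let B := invmx D *m A *m D in
  forall (p : option nat), (forall q, p = Some q -> (1 <= q)%N) ->
  forall (i : 'I_n), i != i1 ->
  forall (k : nat), (1 <= k)%N ->
    cmod (lam i) <= tau p (B ^+ k) `^ (k%:R)^-1.
Proof.
case: n A lam i1 v => [//|n] A lam i1 v _ A_char lam_i1 Av v0 D B p p_ge1.
move=> i i_i1 k k0.
have Be : B *m const_mx 1 = l1 *: const_mx 1 :> 'cV_n.+1.
  exact: diag_conj_mulmx_const v0 Av.
pose Bc := map_mx (real_complex R) B.
have Bce : Bc *m const_mx 1 = l1%:C%C *: const_mx 1 :> 'cV_n.+1.
  by rewrite -(rmorph1 (real_complex R)) -map_const_mx -map_mxM Be map_mxZ.
have Bc_char : char_poly Bc =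
    ('X - (l1%:C%C)%:P) * \prod_(j | j != i1) ('X - (lam j)%:P).
  rewrite -map_char_poly char_poly_conj ?mulVmx ?diag_mx_unit // A_char.
  by rewrite (bigD1 i1) //= lam_i1.
have lam_i_root : root (\prod_(j | j != i1) ('X - (lam j)%:P)) (lam i).
  by rewrite /root horner_prod (bigD1 i) //= hornerXsubC subrr mul0r.
have [z z0 [zB z_sum0]] := left_eigen_sum0 Bce Bc_char lam_i_root.
apply: ler_powR_invn; rewrite ?cmod_ge0 // -cmodX.
apply: (cmod_eigenvalue_le_tau p_ge1 (mulmx_exp_eigen k Be) (z := z^T)).
- by rewrite trmx_eq0.
- transitivity ((z *m (const_mx 1 : 'cV_n.+1)) 0 0); last by rewrite z_sum0 mxE.
  by rewrite mxE; apply: eq_bigr => j _; rewrite !mxE mulr1.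
- by rewrite -map_trmx rmorphXn -trmx_mul (mulmx_exp_left_eigen k zB) linearZ.
Qed.
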